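(* Let $\mathcal C$ be a concept hierarchy, $r_1,r_2,\epsilon\in[0,1]$, $a>0$ a real with $r_1\le ar_2(1-\epsilon)$, $m$ a positive integer, and let $\mathcal L$ be the network defined below with fixed sets $F$ and $E$ satisfying the stated constraints. Then for every $B\subseteq C_0$ presented at time 0 and every concept $c$ with $c\notin supp_{r_1}(B)$, no neuron $v\in reps(c)$ fires at time $level(c)$.
   Context: Concept hierarchies: fix positive integers $\ell_{max},n,k$. A universal set $D$ of concepts is partitioned into disjoint sets $D_0,\dots,D_{\ell_{max}}$ with $|D_0|=n$; $level(c)=\ell$ for $c\in D_\ell$. A concept hierarchy $\mathcal C$ consists of $C\subseteq D$, with $C_\ell=C\cap D_\ell$, and for each $c\in C_\ell$ with $1\le\ell\le\ell_{max}$ a set $children(c)\subseteq C_{\ell-1}$, such that $|C_{\ell_{max}}|=k$, $|children(c)|=k$ for all such $c$, and $children(c)\cap children(c')=\emptyset$ for distinct $c,c'\in C_\ell$. For $B\subseteq D_0$ and $r\in[0,1]$: $B(0)=B\cap C_0$; for $1\le\ell\le\ell_{max}$, $B(\ell)=\{c\in C_\ell:|children(c)\cap B(\ell-1)|\ge rk\}$; $supp_r(B)=\bigcup_{\ell}B(\ell)$. Network $\mathcal L$: neurons partitioned into layers $N_0,\dots,N_{\ell_{max}}$. Each $c\in D_0$ has a set $reps(c)$ of $m$ neurons in $N_0$, each $c\in C$ with $level(c)\ge1$ a set $reps(c)$ of $m$ neurons in $N_{level(c)}$, all pairwise disjoint. $E$ is a set of pairs $(u,v)$ with $v\in reps(c)$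 and $u\in reps(c')$ for some child $c'$ of $c$; for $u\in N_{\ell-1}$, $v\in N_\ell$, $w(u,v)=1$ iff $(u,v)\in E$, else $0$. Threshold $\tau=ar_2km(1-\epsilon)$. A fixed set $F$ of neurons is failed (failed neurons never fire). Constraints: for every concept $c$, at least $m(1-\epsilon)$ neurons of $reps(c)$ are not in $F$; and for every $c$ with $level(c)\ge1$, every $v\in reps(c)$ and every child $c'$ of $c$, there are at least $am(1-\epsilon)$ neurons $u\in reps(c')\setminus F$ with $(u,v)\in E$. Input $B\subseteq C_0$ presented at time 0: a layer-0 neuron fires at time 0 iff it is in $\bigcup_{b\in B}reps(b)\setminus F$, and no layer-0 neuron fires at any other time. A non-failed $v\in N_\ell$, $\ell\ge1$, does not fire at time 0 and fires at time $t\ge1$ iff $\sum_{u\in N_{\ell-1}}w(u,v)x_u(t-1)\ge\tau$, where $x_u(s)\in\{0,1\}$ indicates whether $u$ fires at time $s$. *)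

From HB Require Import structures.
From mathcomp Require Import all_boot all_order all_algebra.
From mathcomp Require Import reals.
Set Implicit Arguments. Unset Strict Implicit. Unset Printing Implicit Defensive.
Import Order.TTheory GRing.Theory Num.Theory.
Local Open Scope ring_scope.

(* Concepts: a finite universal set D; level c = l means c \in D_l. *)
Definition has_reps (D : finType) (level : D -> nat) (C : {set D}) (c : D) : bool :=
  (level c == 0%N) || (c \in C).

Definition is_hierarchy (D : finType) (lmax n k : nat) (level : D -> nat)
  (C : {set D}) (children : D -> {set D}) : Prop :=
  [/\ forall c, (level c <= lmax)%N,
      #|[set c | level c == 0%N]| = n,
      #|[set c in C | level c == lmax]| = k,
      forall c, c \in C -> (1 <= level c)%N ->
        children c \subset [set c' in C | level c' == (level c).-1]
        /\ #|children c| = k &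
      forall c c', c \in C -> c' \in C -> (1 <= level c)%N ->
        level c = level c' -> c != c' -> [disjoint children c & children c']].

Fixpoint Blev (R : realType) (D : finType) (level : D -> nat) (C : {set D})
  (children : D -> {set D}) (k : nat) (r : R) (B : {set D}) (l : nat) : {set D} :=
  match l with
  | 0 => B :&: [set c in C | level c == 0%N]
  | l'.+1 => [set c in C | (level c == l'.+1) &&
               (r * k%:R <= #|children c :&: Blev level C children k r B l'|%:R)]
  end.

Definition supp (R : realType) (D : finType) (level : D -> nat) (C : {set D})
  (children : D -> {set D}) (k lmax : nat) (r : R) (B : {set D}) : {set D} :=
  \bigcup_(l < lmax.+1) Blev level C children k r B l.

(* The network structure: layers N_l = [set u | layer u == l],
   reps, and the edge set E (as a relation E u v : u -> v). *)
Definition is_network (D Nrn : finType) (lmax : nat) (level : D -> nat)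
  (C : {set D}) (children : D -> {set D}) (m : nat)
  (layer : Nrn -> nat) (reps : D -> {set Nrn}) (E : rel Nrn) : Prop :=
  [/\ forall u, (layer u <= lmax)%N,
      forall c, has_reps level C c ->
        #|reps c| = m /\ forall v, v \in reps c -> layer v = level c,
      forall c c', has_reps level C c -> has_reps level C c' -> c != c' ->
        [disjoint reps c & reps c'] &
      forall u v, E u v -> exists c c',
        [/\ c \in C, (1 <= level c)%N, v \in reps c, c' \in children c
          & u \in reps c']].

Definition failure_ok (R : realType) (D Nrn : finType) (level : D -> nat)
  (C : {set D}) (children : D -> {set D}) (m : nat)
  (reps : D -> {set Nrn}) (E : rel Nrn) (F : {set Nrn}) (a eps : R) : Prop :=
  (forall c, has_reps level C c -> m%:R * (1 - eps) <= #|reps c :\: F|%:R) /\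
  (forall c, c \in C -> (1 <= level c)%N -> forall v, v \in reps c ->
     forall c', c' \in children c ->
       a * m%:R * (1 - eps) <= #|[set u in reps c' :\: F | E u v]|%:R).

Definition weight (R : realType) (Nrn : finType) (E : rel Nrn) (u v : Nrn) : R :=
  if E u v then 1 else 0.

(* fires t v  <=>  x_v(t) = 1, for input B presented at time 0. *)
Fixpoint fires (R : realType) (D Nrn : finType) (layer : Nrn -> nat)
  (reps : D -> {set Nrn}) (B : {set D}) (F : {set Nrn}) (E : rel Nrn)
  (tau : R) (t : nat) : Nrn -> bool :=
  match t with
  | 0 => fun v => [&& layer v == 0%N, v \in \bigcup_(b in B) reps b & v \notin F]
  | t'.+1 => fun v => [&& layer v != 0%N, v \notin F &
       tau <= \sum_(u | layer u == (layer v).-1)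
                @weight R Nrn E u v * (if fires layer reps B F E tau t' u then 1 else 0)]
  end.

From HB Require Import structures.
From mathcomp Require Import all_boot all_order all_algebra.
From mathcomp Require Import reals.
From mathcomp Require Import ring.
Import Order.TTheory GRing.Theory Num.Theory.
Local Open Scope ring_scope.

(* The claim is proved for every level by induction, using only the upper
   bound on the input of a neuron: every edge into [reps c] comes from the
   representatives of a child of [c], and by induction only the children in
   [B(l)] can have firing representatives at time [l].  Hence a neuron of
   [reps c] with [c] outside [B(l+1)] receives at most
   [#|children c :&: B(l)| * m < r1 k m <= tau] firing inputs. *)

Lemma leq_card_bigcup {I T : finType} (S : {set I}) (G : I -> {set T}) :
  (#|\bigcup_(i in S) G i| <= \sum_(i in S) #|G i|)%N.
Proof.
elim/big_rec2: _ => [|i n U _ leUn]; first by rewrite cards0.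
by rewrite (leq_trans (leq_card_setU _ _).1) ?leq_add2l.
Qed.

Lemma leq_card_bigcup_const {I T : finType} (S : {set I}) (G : I -> {set T}) m :
  (forall i, i \in S -> #|G i| <= m)%N -> (#|\bigcup_(i in S) G i| <= #|S| * m)%N.
Proof.
move=> leGm; rewrite -sum_nat_const.
by apply: leq_trans (leq_card_bigcup S G) _; apply: leq_sum.
Qed.

Lemma firesS_card {R : realType} {D Nrn : finType} (layer : Nrn -> nat)
    (reps : D -> {set Nrn}) (B : {set D}) (F : {set Nrn}) (E : rel Nrn)
    (tau : R) t v :
  fires layer reps B F E tau t.+1 v =
  [&& layer v != 0%N, v \notin F & tau <=
    #|[set u | [&& layer u == (layer v).-1, E u v
                 & fires layer reps B F E tau t u]]|%:R].
Proof.
rewrite /= -sum1_card natr_sum big_mkcond [in RHS]big_mkcond /=.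
congr [&& _, _ & tau <= _]; apply: eq_bigr => u _.
by rewrite inE /weight; do 3 case: ifP => //= _; rewrite ?mulr1 ?mul0r ?mulr0.
Qed.

Section Network.

Set Implicit Arguments.
Unset Strict Implicit.

Variables (R : realType) (D Nrn : finType) (level : D -> nat) (C : {set D}).
Variables (children : D -> {set D}) (m : nat).
Variables (layer : Nrn -> nat) (reps : D -> {set Nrn}) (E : rel Nrn).

Local Notation has_reps := (has_reps level C).

Hypothesis children_sub : forall c, c \in C -> (1 <= level c)%N ->
  children c \subset [set c' in C | level c' == (level c).-1].
Hypothesis reps_card : forall c, has_reps c -> #|reps c| = m.
Hypothesis reps_layer :
  forall c, has_reps c -> forall v, v \in reps c -> layer v = level c.
Hypothesis reps_disjoint : forall c c', has_reps c -> has_reps c' -> c != c' ->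
  [disjoint reps c & reps c'].
Hypothesis edge_reps : forall u v, E u v -> exists c c',
  [/\ c \in C, (1 <= level c)%N, v \in reps c, c' \in children c & u \in reps c'].

Lemma reps_inj c c' v : has_reps c -> has_reps c' ->
  v \in reps c -> v \in reps c' -> c = c'.
Proof.
move=> hc hc' vc vc'; apply/eqP; apply: contraLR vc' => neq.
by rewrite (disjointFr (reps_disjoint hc hc' neq) vc).
Qed.

Lemma child_reps c c' : c \in C -> (1 <= level c)%N -> c' \in children c ->
  has_reps c' /\ level c' = (level c).-1.
Proof.
move=> cC lc /(subsetP (children_sub cC lc)); rewrite inE => /andP[c'C /eqP ->].
by rewrite /has_reps c'C orbT.
Qed.

Lemma edge_from_child c u v : has_reps c -> v \in reps c -> E u v ->
  exists2 c', c' \in children c & u \in reps c'.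
Proof.
move=> hc vc /edge_reps[c1 [c' [c1C _ vc1 c'c uc']]].
have hc1 : has_reps c1 by rewrite /has_reps c1C orbT.
by rewrite (reps_inj hc1 hc vc1 vc) in c'c; exists c'.
Qed.

Variables (F : {set Nrn}) (B : {set D}) (k : nat) (r tau : R).

Local Notation fires := (fires layer reps B F E tau).
Local Notation Blev := (Blev level C children k r B).

Hypothesis B_sub : B \subset [set c in C | level c == 0%N].
Hypothesis m_gt0 : (0 < m)%N.
Hypothesis tau_ge : r * k%:R * m%:R <= tau.

Lemma fires0_in_Blev c v : has_reps c -> v \in reps c -> fires 0 v -> c \in Blev 0.
Proof.
move=> hc vc /and3P[_ /bigcupP[b bB vb] _].
have := subsetP B_sub b bB; rewrite inE => /andP[bC lb].
have hb : has_reps b by rewrite /has_reps bC orbT.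
by rewrite -(reps_inj hb hc vb vc) /= inE bB inE bC lb.
Qed.

Section Step.

Variable l : nat.
Hypothesis IHl : forall c', has_reps c' -> level c' = l ->
  c' \notin Blev l -> forall u, u \in reps c' -> ~~ fires l u.

Lemma firing_inputs_sub c v : c \in C -> level c = l.+1 -> v \in reps c ->
  [set u | [&& layer u == l, E u v & fires l u]]
    \subset \bigcup_(c' in children c :&: Blev l) reps c'.
Proof.
move=> cC lc vc; have hc : has_reps c by rewrite /has_reps cC orbT.
apply/subsetP => u; rewrite inE => /and3P[_ Euv fu].
have [c' c'c uc'] := edge_from_child hc vc Euv.
have [hc' lc'] := child_reps cC (ltac:(by rewrite lc)) c'c.
apply/bigcupP; exists c' => //; rewrite inE c'c /=.
by apply: contraLR fu => /IHl; apply => //; rewrite lc' lc.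
Qed.

Lemma firesN_reps_notin_BlevS c v : has_reps c -> level c = l.+1 ->
  c \notin Blev l.+1 -> v \in reps c -> ~~ fires l.+1 v.
Proof.
move=> hc lc ncB vc.
have cC : c \in C by move: hc; rewrite /has_reps lc.
set S := children c :&: Blev l.
have ltS : #|S|%:R < r * k%:R.
  by move: ncB; rewrite /= inE cC lc eqxx /= real_leNgt ?num_real // negbK.
rewrite firesS_card (reps_layer hc vc) lc /=; apply/negP => /andP[_].
apply/negP; rewrite -real_ltNge ?num_real //.
apply: (le_lt_trans (y := (#|S| * m)%:R)).
  rewrite ler_nat; apply: leq_trans (subset_leq_card (firing_inputs_sub cC lc vc)) _.
  apply: leq_card_bigcup_const => c'; rewrite inE => /andP[c'c _].
  by rewrite reps_card // (child_reps cC _ c'c).1 // lc.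
by rewrite natrM; apply: lt_le_trans tau_ge; rewrite ltr_pM2r ?ltr0n.
Qed.

End Step.

Lemma firesN_reps_notin_Blev l c : has_reps c -> level c = l ->
  c \notin Blev l -> forall v, v \in reps c -> ~~ fires l v.
Proof.
elim: l c => [|l IHl] c hc lc ncB v vc.
  by apply: contra ncB; apply: fires0_in_Blev.
exact: (firesN_reps_notin_BlevS IHl hc lc ncB).
Qed.

End Network.

Theorem theorem8p4 (R : realType) (D Nrn : finType) (lmax n k : nat)
  (level : D -> nat) (C : {set D}) (children : D -> {set D})
  (r1 r2 eps a : R) (m : nat)
  (layer : Nrn -> nat) (reps : D -> {set Nrn}) (E : rel Nrn) (F : {set Nrn}) :
  (0 < lmax)%N -> (0 < n)%N -> (0 < k)%N ->
  is_hierarchy lmax n k level C children ->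
  0 <= r1 <= 1 -> 0 <= r2 <= 1 -> 0 <= eps <= 1 ->
  0 < a -> r1 <= a * r2 * (1 - eps) -> (0 < m)%N ->
  is_network lmax level C children m layer reps E ->
  failure_ok level C children m reps E F a eps ->
  forall B : {set D}, B \subset [set c in C | level c == 0%N] ->
  forall c : D, has_reps level C c ->
    c \notin supp level C children k lmax r1 B ->
    forall v, v \in reps c ->
      ~~ fires layer reps B F E (a * r2 * k%:R * m%:R * (1 - eps)) (level c) v.
Proof.
move=> _ _ _ [level_le _ _ children_ok _] _ _ _ _ r1_le m_gt0
  [_ reps_ok reps_disjoint edge_reps] _ B B_sub c hc ncB v vc.
have children_sub c1 : c1 \in C -> (1 <= level c1)%N ->
    children c1 \subset [set c' in C | level c' == (level c1).-1].
  by move=> c1C /(children_ok c1 c1C)[].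
have tau_ge : r1 * k%:R * m%:R <= a * r2 * k%:R * m%:R * (1 - eps).
  rewrite -mulrA [X in _ <= X](_ : _ = a * r2 * (1 - eps) * (k%:R * m%:R));
    last by ring.
  by rewrite ler_wpM2r ?mulr_ge0 ?ler0n.
have ncBl : c \notin Blev level C children k r1 B (level c).
  apply: contra ncB => cB; apply/bigcupP.
  by exists (Ordinal (leq_ltn_trans (level_le c) (ltnSn lmax))).
apply: (firesN_reps_notin_Blev children_sub _ _ reps_disjoint edge_reps F B_sub
  m_gt0 tau_ge hc erefl ncBl vc) => c1 /reps_ok[] //.
Qed.
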